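(* Let $\mathcal H$ be a real Hilbert space and $k\ge1$. If a nonzero continuous symmetric $k$-linear form $T$ on $\mathcal H$ attains its norm at $(\mathbf{x}_1,\ldots,\mathbf{x}_k)$, where $\mathbf{x}_1,\ldots,\mathbf{x}_k$ are norm one vectors, then $\dim(\operatorname{span}\{\mathbf{x}_1,\ldots,\mathbf{x}_k\})\le 2$.
   Context: $\|T\|=\sup\{|T(\mathbf{w}_1,\ldots,\mathbf{w}_k)|:\|\mathbf{w}_i\|\le1\}$, and $T$ attains its norm at $(\mathbf{x}_1,\ldots,\mathbf{x}_k)$ if $|T(\mathbf{x}_1,\ldots,\mathbf{x}_k)|=\|T\|$. *)

From HB Require Import structures.
From mathcomp Require Import all_boot all_order all_algebra all_fingroup.
From mathcomp Require Import all_classical all_reals all_analysis.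
Set Implicit Arguments. Unset Strict Implicit. Unset Printing Implicit Defensive.
Import Order.TTheory GRing.Theory Num.Theory.
Import numFieldNormedType.Exports.
Local Open Scope classical_set_scope.
Local Open Scope ring_scope.

Definition is_inner_product (R : realType) (V : normedModType R)
  (ip : V -> V -> R) : Prop :=
  [/\ (forall x y, ip x y = ip y x),
      (forall (a : R) (x y z : V), ip (a *: x + y) z = a * ip x z + ip y z)
    & (forall x, `|x| ^+ 2 = ip x x)].

Definition upd (V : Type) (k : nat) (w : 'I_k -> V) (i : 'I_k) (u : V) : 'I_k -> V :=
  fun j => if j == i then u else w j.

Definition multilinear (R : realType) (V : normedModType R) (k : nat)
  (T : ('I_k -> V) -> R) : Prop :=
  forall (w : 'I_k -> V) (i : 'I_k) (a : R) (u v : V),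
    T (upd w i (a *: u + v)) = a * T (upd w i u) + T (upd w i v).

Definition sym_form (R : realType) (V : normedModType R) (k : nat)
  (T : ('I_k -> V) -> R) : Prop :=
  forall (s : {perm 'I_k}) (w : 'I_k -> V), T (fun j => w (s j)) = T w.

Definition form_norm (R : realType) (V : normedModType R) (k : nat)
  (T : ('I_k -> V) -> R) : R :=
  sup [set `|T w| | w in [set w : 'I_k -> V | forall i, `|w i| <= 1]].

Definition in_span (R : realType) (V : normedModType R) (n : nat)
  (u : 'I_n -> V) (x : V) : Prop :=
  exists c : 'I_n -> R, x = \sum_(j < n) c j *: u j.

(* continuity of T on V^k = 'I_k -> V with the product topology
   (k is finite, so this is the usual topology of V^k) *)
Definition form_continuous (R : realType) (V : normedModType R) (k : nat)
  (T : ('I_k -> V) -> R) : Prop :=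
  continuous (T : {ptws 'I_k -> V} -> R).

(* Freezing all but three arguments (indices i, j, l) of T at the x_m gives a
   symmetric trilinear form C with |C(u, v, w)| <= M |u| |v| |w|, M = ||T||, and
   C(a, b, c) = +-M at the unit vectors a = x_i, b = x_j, c = x_l.  In an inner
   product space a linear functional bounded by M |.| that attains M at a unit
   vector c is M <c, ->; hence C(a, b, -) = M <c, ->, likewise for the other
   pairs, and also for the norming triple (p, p, c) with p = (a + b) / |a + b|.
   The two resulting expressions for C(c, c, -) give (1 - <a, b>) c in
   span{a, b}.  So if some x_i, x_j are not equal up to sign they span every
   x_l, and otherwise every x_l is +-x_i. *)

From mathcomp Require Import all_boot all_order all_algebra all_fingroup.
From mathcomp Require Import all_classical all_reals all_analysis.
From mathcomp Require Import ring lra.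
Import Order.TTheory GRing.Theory Num.Theory.
Local Open Scope classical_set_scope.
Local Open Scope ring_scope.
Set Implicit Arguments. Unset Strict Implicit.

Lemma linear_le_quadratic_eq0 (R : realFieldType) (e d : R) :
  (forall t, t * e <= d * t ^+ 2) -> e = 0.
Proof.
move=> le_ed; set s := 2 * (`|d| + 1); set t := e / s.
have s_gt_d : `|d| < s by rewrite /s; have := normr_ge0 d; lra.
have e_ts : e = t * s by rewrite /t mulfVK // gt_eqF // (le_lt_trans (normr_ge0 d)).
have := le_ed t; rewrite e_ts => le_t.
suff -> : t = 0 by rewrite mul0r.
have : t ^+ 2 * (s - `|d|) <= 0.
  have := ler_wpM2r (sqr_ge0 t) (ler_norm d); nra.
rewrite pmulr_lle0 ?subr_gt0 // => t2_le0.
by apply/eqP; rewrite -sqrf_eq0 eq_le t2_le0 sqr_ge0.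
Qed.

Section LinearFunctional.
Variables (R : realFieldType) (V : normedModType R) (f : V -> R).
Hypothesis f_lin : linear_for *%R f.

Lemma lin_fun0 : f 0 = 0.
Proof. by have := f_lin 1 0 0; rewrite scale1r addr0 mul1r; lra. Qed.

Lemma lin_funZ a u : f (a *: u) = a * f u.
Proof. by rewrite -[a *: u]addr0 f_lin lin_fun0 addr0. Qed.

Lemma lin_funD u v : f (u + v) = f u + f v.
Proof. by have := f_lin 1 u v; rewrite scale1r mul1r. Qed.

Lemma lin_funB u v : f (u - v) = f u - f v.
Proof. by rewrite addrC -scaleN1r f_lin mulN1r addrC. Qed.

Lemma lin_fun_le_norm K :
  (forall u, `|u| <= 1 -> `|f u| <= K) -> forall u, `|f u| <= K * `|u|.
Proof.
move=> f_le u; have [->|u_neq0] := eqVneq u 0; first by rewrite lin_fun0 !normr0 mulr0.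
have nu_neq0 : `|u| != 0 by rewrite normr_eq0.
have -> : f u = `|u| * f (`|u|^-1 *: u) by rewrite lin_funZ mulrA mulfV ?mul1r.
rewrite normrM normr_id mulrC; apply: ler_wpM2r => //; apply: f_le.
by rewrite normrZ ger0_norm ?invr_ge0 // mulVf.
Qed.

End LinearFunctional.

Section InnerProduct.
Variables (R : realType) (V : normedModType R) (ip : V -> V -> R).
Hypothesis ip_inner : is_inner_product ip.

Lemma ipC x y : ip x y = ip y x.
Proof. by case: ip_inner. Qed.

Lemma ip_linl z : linear_for *%R (ip^~ z).
Proof. by case: ip_inner => _ ip_lin _ a x y; exact: ip_lin. Qed.

Lemma ip_linr z : linear_for *%R (ip z).
Proof. by move=> a x y; rewrite !(ipC z) ip_linl. Qed.

Lemma ipxx x : ip x x = `|x| ^+ 2.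
Proof. by case: ip_inner. Qed.

Lemma eq_from_ip u v : (forall y, ip u y = ip v y) -> u = v.
Proof.
move=> uv; apply/eqP; rewrite -subr_eq0 -normr_eq0 -sqrf_eq0 -ipxx.
by rewrite (lin_funB (ip_linl _)) uv subrr.
Qed.

Lemma sqr_normD x y : `|x + y| ^+ 2 = `|x| ^+ 2 + 2 * ip x y + `|y| ^+ 2.
Proof.
rewrite -!ipxx (lin_funD (ip_linl _)) !(lin_funD (ip_linr _)) (ipC y x); ring.
Qed.

Lemma sqr_normB x y : `|x - y| ^+ 2 = `|x| ^+ 2 - 2 * ip x y + `|y| ^+ 2.
Proof. by rewrite sqr_normD normrN -scaleN1r (lin_funZ (ip_linr _)); ring. Qed.

Lemma unit_ip_eq1 x y : `|x| = 1 -> `|y| = 1 -> ip x y = 1 -> y = x.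
Proof.
move=> x1 y1 xy1; apply/eqP; rewrite -subr_eq0 -normr_eq0 -sqrf_eq0.
by rewrite sqr_normB x1 y1 ipC xy1; apply/eqP; ring.
Qed.

Lemma unit_ip_eqN1 x y : `|x| = 1 -> `|y| = 1 -> ip x y = -1 -> y = - x.
Proof.
move=> x1 y1 xy1; apply/eqP; rewrite -addr_eq0 -normr_eq0 -sqrf_eq0.
by rewrite sqr_normD x1 y1 ipC xy1; apply/eqP; ring.
Qed.

Lemma norming_lin_fun (f : V -> R) (K : R) (c : V) :
  linear_for *%R f -> (forall z, f z <= K * `|z|) -> `|c| = 1 -> f c = K ->
  forall y, f y = K * ip c y.
Proof.
move=> f_lin f_le c1 fc y.
have K_ge0 : 0 <= K.
  by have := f_le ((-1) *: c); rewrite (lin_funZ f_lin) fc normrZ normrN1 c1; lra.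
apply/eqP; rewrite -subr_eq0; apply/eqP.
apply: (@linear_le_quadratic_eq0 _ _ (K * `|y| ^+ 2 / 2)) => t.
set n := `|c + t *: y|.
have n2 : n ^+ 2 = 1 + 2 * t * ip c y + t ^+ 2 * `|y| ^+ 2.
  by rewrite sqr_normD c1 (lin_funZ (ip_linr _)) normrZ exprMn real_normK ?num_real //; ring.
(* AM-GM, n <= (1 + n^2) / 2, makes the bound on f (c + t y) quadratic in t,
   so its linear term must vanish. *)
have n_le : n <= (1 + n ^+ 2) / 2 by have := sqr_ge0 (n - 1); rewrite !expr2; lra.
have := f_le (c + t *: y); rewrite (lin_funD f_lin) (lin_funZ f_lin) fc -/n.
have := ler_wpM2l K_ge0 n_le; rewrite n2; nra.
Qed.

Section SymmetricTrilinear.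
Variables (C : V -> V -> V -> R) (M : R).
Hypothesis C_lin : forall v w, linear_for *%R (fun u => C u v w).
Hypothesis C12 : forall u v w, C u v w = C v u w.
Hypothesis C23 : forall u v w, C u v w = C u w v.
Hypothesis C_le : forall u v w, `|u| <= 1 -> `|v| <= 1 -> `|w| <= 1 -> `|C u v w| <= M.

Lemma trilin_lin2 u w : linear_for *%R (fun v => C u v w).
Proof. by move=> a x y; rewrite !(C12 u) C_lin. Qed.

Lemma trilin_lin3 u v : linear_for *%R (C u v).
Proof. by move=> a x y; rewrite !(C23 u v) trilin_lin2. Qed.

Lemma trilin_le_norm u v w : `|C u v w| <= M * `|u| * `|v| * `|w|.
Proof.
have le1 v' w' : `|v'| <= 1 -> `|w'| <= 1 -> forall u', `|C u' v' w'| <= M * `|u'|.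
  by move=> v1 w1; apply: (lin_fun_le_norm (C_lin v' w')) => u' u1; exact: C_le.
have le2 w' : `|w'| <= 1 -> forall u' v', `|C u' v' w'| <= M * `|u'| * `|v'|.
  by move=> w1 u'; apply: (lin_fun_le_norm (trilin_lin2 u' w')) => v' v1; exact: le1.
by apply: (lin_fun_le_norm (trilin_lin3 u v)) => w' w1; exact: le2.
Qed.

Lemma trilin_sqrD u v w : C (u + v) (u + v) w = C u u w + 2 * C u v w + C v v w.
Proof.
rewrite (lin_funD (C_lin _ _)) !(lin_funD (trilin_lin2 _ _)) (C12 v u); ring.
Qed.

Definition norming a b c := [/\ `|a| = 1, `|b| = 1, `|c| = 1 & C a b c = M].

Lemma norming_swap12 a b c : norming a b c -> norming b a c.
Proof. by case=> *; split; rewrite // C12. Qed.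

Lemma norming_swap23 a b c : norming a b c -> norming a c b.
Proof. by case=> *; split; rewrite // C23. Qed.

Lemma norming_slice a b c : norming a b c -> forall y, C a b y = M * ip c y.
Proof.
case=> a1 b1 c1 abc; apply: norming_lin_fun (trilin_lin3 a b) _ c1 abc => z.
by apply: le_trans (ler_norm _) _; have := trilin_le_norm a b z; rewrite a1 b1 !mulr1.
Qed.

Lemma norming_sum_slice a b c : norming a b c ->
  forall y, C (a + b) (a + b) y = M * `|a + b| ^+ 2 * ip c y.
Proof.
move=> nabc; have [a1 b1 c1 abc] := nabc.
apply: norming_lin_fun (trilin_lin3 _ _) _ c1 _ => [z|].
  by apply: le_trans (ler_norm _) _; rewrite expr2 !mulrA trilin_le_norm.
rewrite trilin_sqrD abc C23 (norming_slice (norming_swap23 nabc)).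
rewrite C23 (norming_slice (norming_swap23 (norming_swap12 nabc))).
by rewrite sqr_normD a1 b1 (ipC b a); ring.
Qed.

Lemma norming_sqr_slice a b c : norming a b c ->
  forall y, C a a y + C b b y = 2 * ip a b * M * ip c y.
Proof.
move=> nabc y; have [a1 b1 _ _] := nabc.
have := norming_sum_slice nabc y.
rewrite trilin_sqrD (norming_slice nabc) sqr_normD a1 b1; lra.
Qed.

Lemma norming_normalized_sum a b c : norming a b c -> a + b != 0 ->
  norming (`|a + b|^-1 *: (a + b)) (`|a + b|^-1 *: (a + b)) c.
Proof.
move=> nabc ab_neq0; have [_ _ c1 _] := nabc.
have nab_neq0 : `|a + b| != 0 by rewrite normr_eq0.
have p1 : `| `|a + b|^-1 *: (a + b)| = 1 by rewrite normrZ normfV normr_id mulVf.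
split=> //.
rewrite (lin_funZ (C_lin _ _)) (lin_funZ (trilin_lin2 _ _)) (norming_sum_slice nabc).
by rewrite ipxx c1; field.
Qed.

Lemma norming_span a b c : M != 0 -> norming a b c ->
  ip a b != 1 -> ip a b != -1 -> exists l m : R, c = l *: a + m *: b.
Proof.
move=> M_neq0 nabc ab_neq1 ab_neqN1; have [a1 b1 c1 _] := nabc.
have ab_neq0 : a + b != 0.
  apply: contra ab_neqN1; rewrite addr_eq0 => /eqP ->.
  by rewrite -scaleN1r (lin_funZ (ip_linl _)) ipxx b1 expr1n mulr1.
set s := `|a + b|^-1; set p := s *: (a + b).
have npc := norming_normalized_sum nabc ab_neq0.
(* C c c computed from the norming triples (p, c, p) and (a, b, c). *)
have Ccc_p y : C c c y = M * (2 * ip p c * ip p y - ip c y).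
  have := norming_sqr_slice (norming_swap23 npc) y.
  rewrite (norming_slice npc); lra.
have Ccc_ab y : C c c y = M * (ip a c * ip b y + ip b c * ip a y - ip a b * ip c y).
  have := norming_sqr_slice nabc y.
  have := norming_sqr_slice (norming_swap23 nabc) y.
  have := norming_sqr_slice (norming_swap23 (norming_swap12 nabc)) y.
  lra.
have e_neq0 : 1 - ip a b != 0 by rewrite subr_eq0 eq_sym.
set al := 2 * ip p c * s - ip b c; set be := 2 * ip p c * s - ip a c.
have ipp y : ip p y = s * (ip a y + ip b y).
  by rewrite (lin_funZ (ip_linl _)) (lin_funD (ip_linl _)).
exists ((1 - ip a b)^-1 * al), ((1 - ip a b)^-1 * be); apply: eq_from_ip => y.
rewrite (lin_funD (ip_linl _)) !(lin_funZ (ip_linl _)) -!mulrA -mulrDr.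
apply: (canRL (mulKf e_neq0)).
have := Ccc_ab y; rewrite Ccc_p /al /be !ipp => /(mulfI M_neq0).
lra.
Qed.

End SymmetricTrilinear.

Lemma span_of_abs_norming (C : V -> V -> V -> R) (M : R) a b c :
  (forall v w, linear_for *%R (fun u => C u v w)) ->
  (forall u v w, C u v w = C v u w) -> (forall u v w, C u v w = C u w v) ->
  (forall u v w, `|u| <= 1 -> `|v| <= 1 -> `|w| <= 1 -> `|C u v w| <= M) ->
  `|a| = 1 -> `|b| = 1 -> `|c| = 1 -> `|C a b c| = M -> M != 0 ->
  ip a b != 1 -> ip a b != -1 -> exists l m : R, c = l *: a + m *: b.
Proof.
move=> C_lin C12 C23 C_le a1 b1 c1 abc M_neq0.
have [abc_ge0|abc_lt0] := leP 0 (C a b c).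
  by apply: (norming_span C_lin C12 C23 C_le M_neq0); split; rewrite // -abc ger0_norm.
apply: (@norming_span (fun u v w => - C u v w) M) => //.
- by move=> v w e u u'; rewrite C_lin; ring.
- by move=> u v w; rewrite C12.
- by move=> u v w; rewrite C23.
- by move=> u v w u1 v1 w1; rewrite normrN C_le.
- by split; rewrite // -abc ltr0_norm.
Qed.

End InnerProduct.

Section Update.
Variables (V : Type) (k : nat).

Lemma upd_id (w : 'I_k -> V) i : upd w i (w i) = w.
Proof. by apply: funext => j; rewrite /upd; case: eqP => // ->. Qed.

Lemma upd_comm (w : 'I_k -> V) i j u v : i != j ->
  upd (upd w i u) j v = upd (upd w j v) i u.
Proof.
move=> ij; apply: funext => m; rewrite /upd.
by case: (eqVneq m j) => [->|//]; rewrite eq_sym (negbTE ij).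
Qed.

End Update.

Section MultilinearForm.
Variables (R : realType) (V : normedModType R) (k : nat) (T : ('I_k -> V) -> R).
Hypothesis T_lin : multilinear T.

Lemma multilinear_upd w i : linear_for *%R (fun u => T (upd w i u)).
Proof. exact: T_lin. Qed.

Lemma multilinear_homog e w : T (fun j => e *: w j) = e ^+ k * T w.
Proof.
pose scale_prefix n := fun j : 'I_k => if (j < n)%N then e *: w j else w j.
suff prefixE n : (n <= k)%N -> T (scale_prefix n) = e ^+ n * T w.
  by rewrite -prefixE //; congr T; apply: funext => j; rewrite /scale_prefix ltn_ord.
elim: n => [_|n IH lt_nk]; first by rewrite expr0 mul1r.
set o : 'I_k := Ordinal lt_nk.
have -> : scale_prefix n.+1 = upd (scale_prefix n) o (e *: w o).
  apply: funext => j; rewrite /upd /scale_prefix ltnS leq_eqVlt.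
  case: (eqVneq j o) => [->|j_neq_o] /=; first by rewrite eqxx.
  suff -> : (j == n :> nat) = false by [].
  by apply/negbTE; apply: contra j_neq_o => /eqP j_n; apply/eqP/val_inj.
have prefix_o : scale_prefix n o = w o by rewrite /scale_prefix ltnn.
rewrite (lin_funZ (multilinear_upd _ _)) -prefix_o upd_id IH ?exprS ?mulrA //.
exact: ltnW.
Qed.

Lemma multilinear_bounded : form_continuous T ->
  exists K, forall w, (forall i, `|w i| <= 1) -> `|T w| <= K.
Proof.
move=> T_cont.
(* Continuity at 0 bounds |T| on a small box, which homogeneity rescales. *)
pose box d := [set w : 'I_k -> V | forall i, `|w i| < d].
pose G := filter_from [set d : R | 0 < d] box.
have G_filter : Filter G.
  apply: filter_from_filter; first by exists 1; rewrite /= ltr01.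
  move=> d1 d2 d1_gt0 d2_gt0; exists (Num.min d1 d2); first by rewrite /= lt_min d1_gt0.
  by move=> w w_lt; split=> i; have := w_lt i; rewrite lt_min => /andP[].
have G_cvg0 : G --> (0 : {ptws 'I_k -> V}).
  apply/(@pointwise_cvgP (discrete_topology 'I_k) V G 0 G_filter) => i.
  apply/(@cvgr0Pnorm_lt _ _ _ G G_filter) => eps eps_gt0.
  by exists eps => // w; apply.
have [d d_gt0 box_d] : G [set w | `|T 0 - T w| < 1].
  by apply: G_cvg0; move/cvgrPdist_lt: (T_cont 0); apply.
exists ((2 / d) ^+ k * (`|T 0| + 1)) => w w_le1.
have d2_gt0 : 0 < d / 2 by rewrite divr_gt0.
have dk_gt0 : 0 < (d / 2) ^+ k by rewrite exprn_gt0.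
have : `|T 0 - T (fun j => (d / 2) *: w j)| < 1.
  apply: box_d => i; rewrite /= normrZ gtr0_norm //.
  by have := ler_wpM2l (ltW d2_gt0) (w_le1 i); lra.
rewrite multilinear_homog distrC => dist_lt1.
have := ler_normD (T 0) ((d / 2) ^+ k * T w - T 0).
rewrite addrC subrK normrM (ger0_norm (ltW dk_gt0)) => Tw_le.
by rewrite -invf_div exprVn ler_pdivlMl //; lra.
Qed.

Lemma le_form_norm K : (forall w, (forall i, `|w i| <= 1) -> `|T w| <= K) ->
  forall w, (forall i, `|w i| <= 1) -> `|T w| <= form_norm T.
Proof.
move=> T_le w w_le1; apply: ub_le_sup; last by exists w.
by exists K => _ [w' w'_le1 <-]; exact: T_le.
Qed.

Lemma form_norm_gt0 K w0 : (forall w, (forall i, `|w i| <= 1) -> `|T w| <= K) ->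
  T w0 != 0 -> 0 < form_norm T.
Proof.
move=> T_le Tw0_neq0; set s := \sum_i `|w0 i|.
have s_ge0 : 0 <= s by apply: sumr_ge0.
set e := (1 + s)^-1; have e_gt0 : 0 < e by rewrite invr_gt0; lra.
have ew0_le1 i : `|e *: w0 i| <= 1.
  rewrite normrZ gtr0_norm // /e mulrC ler_pdivrMr; last by lra.
  have : `|w0 i| <= s by rewrite /s (bigD1 i) //= lerDl sumr_ge0.
  lra.
apply: lt_le_trans (le_form_norm T_le ew0_le1).
by rewrite multilinear_homog normrM normrX gtr0_norm // mulr_gt0 ?exprn_gt0 ?normr_gt0.
Qed.

Hypothesis T_sym : sym_form T.

Lemma sym_form_upd_swap w i j u v : i != j ->
  T (upd (upd w i u) j v) = T (upd (upd w i v) j u).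
Proof.
move=> ij; rewrite -(T_sym (tperm i j) (upd (upd w i u) j v)); congr T.
apply: funext => m; rewrite /upd; have ji : j != i by rewrite eq_sym.
case: (tpermP i j m) => [->|->|/eqP/negbTE -> /eqP/negbTE ->] //;
  by rewrite !eqxx ?(negbTE ij) ?(negbTE ji).
Qed.

Section Slice3.
Variables (x : 'I_k -> V) (i j l : 'I_k).
Hypotheses (ij : i != j) (il : i != l) (jl : j != l).

Definition slice3 u v w := T (upd (upd (upd x i u) j v) l w).

Lemma slice3_lin v w : linear_for *%R (fun u => slice3 u v w).
Proof.
have upd_i z : upd (upd (upd x i z) j v) l w = upd (upd (upd x j v) l w) i z.
  by rewrite (upd_comm _ _ _ ij) (upd_comm _ _ _ il).
by move=> a u u'; rewrite /slice3 !upd_i multilinear_upd.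
Qed.

Lemma slice3_12 u v w : slice3 u v w = slice3 v u w.
Proof.
have upd_l a b : upd (upd (upd x i a) j b) l w = upd (upd (upd x l w) i a) j b.
  by rewrite (upd_comm _ _ _ jl) (upd_comm _ _ _ il).
by rewrite /slice3 !upd_l sym_form_upd_swap.
Qed.

Lemma slice3_23 u v w : slice3 u v w = slice3 u w v.
Proof. exact: sym_form_upd_swap. Qed.

Lemma slice3_id : slice3 (x i) (x j) (x l) = T x.
Proof. by rewrite /slice3 !upd_id. Qed.

Lemma slice3_le K : (forall w, (forall m, `|w m| <= 1) -> `|T w| <= K) ->
  (forall m, `|x m| <= 1) ->
  forall u v w, `|u| <= 1 -> `|v| <= 1 -> `|w| <= 1 -> `|slice3 u v w| <= K.
Proof.
move=> T_le x_le1 u v w u1 v1 w1; apply: T_le => m; rewrite /upd.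
by do 3!case: ifP => _ //.
Qed.

End Slice3.
End MultilinearForm.

Lemma in_span_pair (R : realType) (V : normedModType R) (u0 u1 v : V) :
  (exists a b : R, v = a *: u0 + b *: u1) -> in_span (tnth [tuple u0; u1]) v.
Proof.
case=> a [b ->]; exists (tnth [tuple a; b]).
by rewrite !big_ord_recl big_ord0 addr0.
Qed.

Lemma span2_of_triples (R : realType) (V : normedModType R) (ip : V -> V -> R)
    (k : nat) (x : 'I_k -> V) :
  is_inner_product ip -> (forall i, `|x i| = 1) ->
  (forall i j l, i != j -> i != l -> j != l ->
     ip (x i) (x j) != 1 -> ip (x i) (x j) != -1 ->
     exists a b : R, x l = a *: x i + b *: x j) ->
  exists u : 'I_2 -> V, forall i, in_span u (x i).
Proof.
move=> ip_inner x1 x_span.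
have [[i [j [ij_neq1 ij_neqN1]]]|all_pm] :=
  pselect (exists i j, ip (x i) (x j) != 1 /\ ip (x i) (x j) != -1).
  have ij : i != j by apply: contra ij_neq1 => /eqP ->; rewrite ipxx // x1 expr1n.
  exists (tnth [tuple x i; x j]) => l; apply: in_span_pair.
  have [->|li] := eqVneq l i; first by exists 1, 0; rewrite scale1r scale0r addr0.
  have [->|lj] := eqVneq l j; first by exists 0, 1; rewrite scale1r scale0r add0r.
  by apply: x_span; rewrite // eq_sym.
have [[i0 _]|no_index] := pselect (exists i0 : 'I_k, True); last first.
  by exists (fun=> 0) => i; case: no_index; exists i.
exists (tnth [tuple x i0; 0]) => l; apply: in_span_pair.
have [il1|il_neq1] := eqVneq (ip (x i0) (x l)) 1.
  by exists 1, 0; rewrite scale1r scale0r addr0 (unit_ip_eq1 ip_inner (x1 i0) (x1 l)).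
have [ilN1|il_neqN1] := eqVneq (ip (x i0) (x l)) (-1).
  by exists (-1), 0; rewrite scaleN1r scale0r addr0 (unit_ip_eqN1 ip_inner (x1 i0) (x1 l)).
by case: all_pm; exists i0, l.
Qed.

Theorem proposition4p1 (R : realType) (V : completeNormedModType R)
  (ip : V -> V -> R) (k : nat) (T : ('I_k -> V) -> R) (x : 'I_k -> V) :
  is_inner_product ip ->
  (0 < k)%N ->
  multilinear T ->
  sym_form T ->
  form_continuous T ->
  (exists w, T w != 0) ->
  (forall i, `|x i| = 1) ->
  `|T x| = form_norm T ->
  (* dim span{x_1,...,x_k} <= 2 : the span is contained in the span of two vectors *)
  exists u : 'I_2 -> V, forall i, in_span u (x i).
Proof.
move=> ip_inner _ T_lin T_sym T_cont [w0 Tw0_neq0] x1 Tx_norm.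
have [K T_le] := multilinear_bounded T_lin T_cont.
have M_neq0 : form_norm T != 0 by rewrite gt_eqF // (form_norm_gt0 T_lin T_le Tw0_neq0).
have x_le1 i : `|x i| <= 1 by rewrite x1.
apply: (span2_of_triples ip_inner x1) => i j l ij il jl.
apply: (span_of_abs_norming ip_inner (C := slice3 T x i j l) (M := form_norm T)) => //.
- exact: slice3_lin.
- exact: slice3_12.
- exact: slice3_23.
- exact: slice3_le (le_form_norm T_le) x_le1.
- by rewrite slice3_id.
Qed.
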